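(* Let $\mathcal X$ be a countable set with the discrete topology. For every $P\in\Delta^*_{BD}$ and every path $\omega\in\Omega$, $\lim_{t\to\infty}P(\omega^t\mid\Omega)=0$.
   Context: $\Omega=\mathcal X^{\mathbb N}$ with the product topology; $\omega^t$ is the cylinder of paths agreeing with $\omega$ in the first $t$ coordinates ($\omega^0=\Omega$); $\mathcal H$ is the set of cylinders. $\Sigma$ is a $\sigma$-algebra containing all open sets; $\mathbb P$ the set of finitely additive probabilities on $(\Omega,\Sigma)$; $P\in\mathbb P$ is strongly nonatomic if for every $E\in\Sigma$, $\alpha\in[0,1]$ there is $F\in\Sigma$, $F\subseteq E$, with $P(F)=\alpha P(E)$. A conditional probability is a function $P:\Sigma\times\mathcal H\to[0,1]$ such that for every $t\ge0$, $\omega$: (1) $P(\cdot\mid\omega^t)\in\mathbb P$; (2) $P(\omega^t\mid\omega^t)=1$; (3) $P(E\cap\omega^{t+n}\mid\omega^t)=P(E\mid\omega^{t+n})P(\omega^{t+n}\mid\omega^t)$ for all $E$, $n\ge0$. It is a conditional opinion if $P(\cdot\mid\Omega)$ is strongly nonatomic. For conditional probabilities $P,Q$, $P$ merges with $Q$ if for every $\varepsilon>0$, $\lim_{t\to\infty}Q(\{\omega:\sup_{E\in\Sigma}|P(E\mid\omega^t)-Q(E\mid\omega^t)|>\varepsilon\}\mid\Omega)=0$. For $Q,R\in\mathbb P$, $Q\ll R$ means $R(E_n)\to0$ implies $Q(E_n)\to0$ for every sequence in $\Sigma$. A conditional probability $P$ has the Blackwell–Dubins property if for every $Q\in\mathbb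 P$ with $Q\ll P(\cdot\mid\Omega)$ there is a conditional probability $\widetilde Q$ with $\widetilde Q(\cdot\mid\Omega)=Q$ such that $P$ merges with $\widetilde Q$. $\Delta^*_{BD}$ is the set of conditional opinions with the Blackwell–Dubins property. *)

From Stdlib Require Import Reals.
Open Scope R_scope.
Set Implicit Arguments.

(* Omega = X^N ; events are predicates on paths. *)
Definition path (X : Type) := nat -> X.
Definition event (X : Type) := path X -> Prop.

Definition full (X : Type) : event X := fun _ => True.
Arguments full X : clear implicits.

Definition cyl (X : Type) (w : path X) (t : nat) : event X :=
  fun w' => forall i, (i < t)%nat -> w' i = w i.

Definition countable (X : Type) : Prop :=
  exists f : X -> nat, forall x y, f x = f y -> x = y.

(* Open sets of the product topology on X^N, X discrete:
   U is open iff every point of U has a cylinder neighbourhood inside U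
   (cylinders form a base of this topology). *)
Definition is_open (X : Type) (U : event X) : Prop :=
  forall w, U w -> exists t, forall w', cyl w t w' -> U w'.

Definition sigma_algebra {X : Type} (S : event X -> Prop) : Prop :=
  S (full X) /\
  (forall E, S E -> S (fun w => ~ E w)) /\
  (forall En : nat -> event X, (forall n, S (En n)) -> S (fun w => exists n, En n w)).

Definition admissible (X : Type) (S : event X -> Prop) : Prop :=
  sigma_algebra S /\ (forall U, is_open U -> S U).

(* Finitely additive probability on (Omega, Sigma); only values on Sigma matter. *)
Definition fa_prob (X : Type) (S : event X -> Prop) (P : event X -> R) : Prop :=
  (forall E, S E -> 0 <= P E) /\
  P (full X) = 1 /\
  (forall E F, S E -> S F -> (forall w, E w -> F w -> False) ->
     P (fun w => E w \/ F w) = P E + P F).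

Definition strongly_nonatomic (X : Type) (S : event X -> Prop) (P : event X -> R) : Prop :=
  forall E, S E -> forall alpha, 0 <= alpha <= 1 ->
    exists F, S F /\ (forall w, F w -> E w) /\ P F = alpha * P E.

(* Conditional probability: P E H, with H ranging over cylinders omega^t. *)
Definition cond_prob (X : Type) (S : event X -> Prop) (P : event X -> event X -> R) : Prop :=
  forall (t : nat) (w : path X),
    fa_prob S (fun E => P E (cyl w t)) /\
    P (cyl w t) (cyl w t) = 1 /\
    (forall E n, S E ->
       P (fun w' => E w' /\ cyl w (t + n) w') (cyl w t)
       = P E (cyl w (t + n)) * P (cyl w (t + n)) (cyl w t)).

Definition cond_opinion (X : Type) (S : event X -> Prop) (P : event X -> event X -> R) : Prop :=
  cond_prob S P /\ strongly_nonatomic S (fun E => P E (full X)).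

(* P merges with Q. The sup over E in Sigma exceeds eps iff some E in Sigma does. *)
Definition merges (X : Type) (S : event X -> Prop) (P Q : event X -> event X -> R) : Prop :=
  forall eps, eps > 0 ->
    Un_cv (fun t => Q (fun w => exists E, S E /\
                          Rabs (P E (cyl w t) - Q E (cyl w t)) > eps) (full X)) 0.

Definition abs_cont (X : Type) (S : event X -> Prop) (Q R0 : event X -> R) : Prop :=
  forall En : nat -> event X, (forall n, S (En n)) ->
    Un_cv (fun n => R0 (En n)) 0 -> Un_cv (fun n => Q (En n)) 0.

Definition blackwell_dubins (X : Type) (S : event X -> Prop) (P : event X -> event X -> R) : Prop :=
  forall Q : event X -> R, fa_prob S Q -> abs_cont S Q (fun E => P E (full X)) ->
    exists Qt : event X -> event X -> R,
      cond_prob S Qt /\ (forall E, S E -> Qt E (full X) = Q E) /\ merges S P Qt.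

Definition in_Delta_BD (X : Type) (S : event X -> Prop) (P : event X -> event X -> R) : Prop :=
  cond_opinion S P /\ blackwell_dubins S P.

(* Suppose the mass L = lim_t P(w^t) of the cylinders around w were positive. Pick s with
   P(w^s) < 2L and, by nonatomicity, F inside w^s with P(F) = P(w^s)/2. Conditioning P on F
   along w, Q(E) = lim_r P(E & F & w^r) / lim_r P(F & w^r), gives a finitely additive
   probability with Q << P that is carried by every F & w^t. Any conditional extension of Q
   therefore gives F conditional probability 1 at every w^t, whereas P(F | w^t) <= P(F)/L < 1;
   this uniform disagreement on a Q-sure event rules out merging. *)

From Stdlib Require Import Reals Lra Lia.
From Stdlib Require Import Classical ClassicalEpsilon FunctionalExtensionality PropExtensionality.
Open Scope R_scope.
Set Implicit Arguments.
Unset Strict Implicit.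

Lemma event_ext (X : Type) (E F : event X) : (forall w, E w <-> F w) -> E = F.
Proof.
  intro H; apply functional_extensionality; intro w.
  apply propositional_extensionality; auto.
Qed.

Section SigmaAlgebra.
Variables (X : Type) (S : event X -> Prop).
Hypothesis HS : sigma_algebra S.

Lemma sigma_full : S (full X).
Proof. apply HS. Qed.

Lemma sigma_compl E : S E -> S (fun w => ~ E w).
Proof. apply HS. Qed.

Lemma sigma_union E F : S E -> S F -> S (fun w => E w \/ F w).
Proof.
  intros HE HF.
  replace (fun w => E w \/ F w)
    with (fun w => exists n, (match n with O => E | _ => F end) w).
  - apply HS; intros [|n]; assumption.
  - apply event_ext; intro w; split.
    + intros [[|n] Hw]; auto.
    + intros [Hw|Hw]; [exists O | exists 1%nat]; exact Hw.
Qed.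

Lemma sigma_inter E F : S E -> S F -> S (fun w => E w /\ F w).
Proof.
  intros HE HF.
  replace (fun w => E w /\ F w) with (fun w => ~ (~ E w \/ ~ F w)).
  - apply sigma_compl, sigma_union; apply sigma_compl; assumption.
  - apply event_ext; intro w; tauto.
Qed.

Lemma sigma_diff E F : S E -> S F -> S (fun w => E w /\ ~ F w).
Proof. intros HE HF; apply sigma_inter; [|apply sigma_compl]; assumption. Qed.

End SigmaAlgebra.

Section FinitelyAdditive.
Variables (X : Type) (S : event X -> Prop) (mu : event X -> R).
Hypotheses (HS : sigma_algebra S) (Hmu : fa_prob S mu).

Lemma fa_prob_ge0 E : S E -> 0 <= mu E.
Proof. apply Hmu. Qed.

Lemma fa_prob_add E F : S E -> S F -> (forall w, E w -> F w -> False) ->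
  mu (fun w => E w \/ F w) = mu E + mu F.
Proof. apply Hmu. Qed.

Lemma fa_prob_split E F : S E -> S F ->
  mu E = mu (fun w => E w /\ F w) + mu (fun w => E w /\ ~ F w).
Proof.
  intros HE HF.
  replace (mu E) with (mu (fun w => (E w /\ F w) \/ (E w /\ ~ F w)))
    by (f_equal; apply event_ext; intro w; tauto).
  apply fa_prob_add; [apply sigma_inter | apply sigma_diff | tauto]; assumption.
Qed.

Lemma fa_prob_mono E F : S E -> S F -> (forall w, E w -> F w) -> mu E <= mu F.
Proof.
  intros HE HF Hsub.
  rewrite (fa_prob_split HF HE).
  replace (fun w => F w /\ E w) with E by (apply event_ext; intro w; firstorder).
  pose proof (fa_prob_ge0 (sigma_diff HS HF HE)); lra.
Qed.

Lemma fa_prob_inter_ge E F H : S E -> S F -> S H ->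
  (forall w, E w -> H w) -> (forall w, F w -> H w) ->
  mu E + mu F - mu H <= mu (fun w => E w /\ F w).
Proof.
  intros HE HF HH HEH HFH.
  assert (Hunion : mu (fun w => E w \/ (F w /\ ~ E w)) <= mu H).
  { apply fa_prob_mono; [apply sigma_union, sigma_diff | | ]; auto.
    intros w [Hw|[Hw _]]; auto. }
  rewrite fa_prob_add in Hunion; [| assumption | apply sigma_diff; assumption | tauto].
  rewrite (fa_prob_split HF HE).
  replace (fun w => F w /\ E w) with (fun w => E w /\ F w)
    by (apply event_ext; intro w; tauto).
  lra.
Qed.

End FinitelyAdditive.

Definition seq_lim (u : nat -> R) : R := epsilon (inhabits 0) (Un_cv u).

Lemma seq_lim_cv u l : Un_cv u l -> Un_cv u (seq_lim u).
Proof. intro Hu; apply (epsilon_spec (inhabits 0) (Un_cv u)); exists l; exact Hu. Qed.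

Lemma seq_lim_eq u l : Un_cv u l -> seq_lim u = l.
Proof. intro Hu; apply (UL_sequence u); [apply seq_lim_cv with l|]; assumption. Qed.

Lemma Un_cv_const c : Un_cv (fun _ => c) c.
Proof. intros eps Heps; exists O; intros n _; rewrite Rdist_eq; exact Heps. Qed.

Lemma Un_cv_decreasing_ge0 u : Un_decreasing u -> (forall n, 0 <= u n) ->
  Un_cv u (seq_lim u).
Proof.
  intros Hdec Hge0.
  destruct (decreasing_cv u Hdec) as [l Hl].
  - exists 0; intros x [n ->]; unfold opp_seq; specialize (Hge0 n); lra.
  - exact (seq_lim_cv Hl).
Qed.

Lemma Un_cv_ext_eventually u v l N : (forall n, (N <= n)%nat -> v n = u n) ->
  Un_cv u l -> Un_cv v l.
Proof.
  intros Hvu Hu eps Heps; destruct (Hu eps Heps) as [M HM].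
  exists (max M N); intros n Hn; rewrite Hvu by lia; apply HM; lia.
Qed.

Lemma Un_cv_squeeze0 u v : (forall n, 0 <= v n <= u n) -> Un_cv u 0 -> Un_cv v 0.
Proof.
  intros Huv Hu eps Heps; destruct (Hu eps Heps) as [N HN].
  exists N; intros n Hn; specialize (HN n Hn); specialize (Huv n).
  unfold Rdist in *; rewrite Rminus_0_r, Rabs_pos_eq in * by lra; lra.
Qed.

Section Cylinders.
Variable X : Type.

Lemma cyl_zero (w : path X) : cyl w 0 = full X.
Proof. apply event_ext; intro v; split; [constructor | intros _ i Hi; lia]. Qed.

Lemma cyl_antitone (w : path X) t r : (t <= r)%nat -> forall v, cyl w r v -> cyl w t v.
Proof. intros Htr v Hv i Hi; apply Hv; lia. Qed.

Lemma cyl_of_mem (w v : path X) t : cyl w t v -> cyl v t = cyl w t.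
Proof.
  intro Hv; apply event_ext; intros u; split; intros Hu i Hi;
    rewrite Hu by exact Hi; [|symmetry]; apply Hv; exact Hi.
Qed.

Lemma cyl_open (w : path X) t : is_open (cyl w t).
Proof. intros v Hv; exists t; intros u Hu; rewrite <- (cyl_of_mem Hv); exact Hu. Qed.

Lemma cyl_measurable (S : event X -> Prop) (w : path X) t : admissible S -> S (cyl w t).
Proof. intros [_ Hopen]; apply Hopen, cyl_open. Qed.

End Cylinders.

Section ConditionalProbability.
Variables (X : Type) (S : event X -> Prop) (P : event X -> event X -> R).
Hypotheses (HS : admissible S) (HP : cond_prob S P).

Lemma cond_prob_full (w : path X) : fa_prob S (fun E => P E (full X)).
Proof. rewrite <- (cyl_zero w); apply HP. Qed.

Lemma cond_prob_chain_full (w : path X) t E : S E ->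
  P (fun v => E v /\ cyl w t v) (full X) = P E (cyl w t) * P (cyl w t) (full X).
Proof.
  intro HE; destruct (HP 0%nat w) as [_ [_ Hchain]].
  rewrite <- (cyl_zero w); exact (Hchain E t HE).
Qed.

Lemma cond_prob_cyl_mass (w : path X) : exists L,
  Un_cv (fun t => P (cyl w t) (full X)) L /\ 0 <= L /\
  forall t, L <= P (cyl w t) (full X).
Proof.
  assert (Hdec : Un_decreasing (fun t => P (cyl w t) (full X))).
  { intro t; apply (fa_prob_mono (proj1 HS) (cond_prob_full w));
      [apply cyl_measurable.. | apply cyl_antitone]; auto. }
  assert (Hge0 : forall t, 0 <= P (cyl w t) (full X)).
  { intro t; apply (fa_prob_ge0 (cond_prob_full w)), cyl_measurable; auto. }
  pose proof (Un_cv_decreasing_ge0 Hdec Hge0) as Hcv.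
  exists (seq_lim (fun t => P (cyl w t) (full X))); repeat split.
  - exact Hcv.
  - exact (Rle_cv_lim Hge0 (Un_cv_const 0) Hcv).
  - exact (decreasing_ineq _ _ Hdec Hcv).
Qed.

Lemma cond_prob_le_ratio (w : path X) t F L : S F -> 0 < L ->
  L <= P (cyl w t) (full X) -> P F (cyl w t) <= P F (full X) / L.
Proof.
  intros HF HL HLt.
  assert (Hinter : P (fun v => F v /\ cyl w t v) (full X) <= P F (full X)).
  { apply (fa_prob_mono (proj1 HS) (cond_prob_full w)); [|exact HF|tauto].
    apply (sigma_inter (proj1 HS) HF), cyl_measurable, HS. }
  rewrite cond_prob_chain_full in Hinter by exact HF.
  assert (HFt : 0 <= P F (cyl w t)) by (apply (proj1 (proj1 (HP t w))); exact HF).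
  apply Rmult_le_reg_r with L; [exact HL|].
  unfold Rdiv; rewrite Rmult_assoc, Rinv_l, Rmult_1_r by lra; nra.
Qed.

Lemma cond_prob_eq1 (w : path X) t F : S F ->
  P (fun v => F v /\ cyl w t v) (full X) = 1 -> P (cyl w t) (full X) = 1 ->
  P F (cyl w t) = 1.
Proof.
  intros HF HFt Ht; rewrite cond_prob_chain_full, Ht in HFt by exact HF; lra.
Qed.

End ConditionalProbability.

Section PathConditioning.
Variables (X : Type) (S : event X -> Prop) (mu : event X -> R) (F : event X) (w : path X).
Hypotheses (HS : admissible S) (Hmu : fa_prob S mu) (HF : S F).

Definition path_trace (E : event X) (r : nat) : R := mu (fun v => E v /\ F v /\ cyl w r v).

Definition path_cond (E : event X) : R :=
  seq_lim (path_trace E) / seq_lim (path_trace (full X)).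

Lemma path_trace_measurable E r : S E -> S (fun v => E v /\ F v /\ cyl w r v).
Proof.
  intro HE; apply (sigma_inter (proj1 HS) HE), (sigma_inter (proj1 HS) HF).
  apply cyl_measurable, HS.
Qed.

Lemma path_trace_decreasing E : S E -> Un_decreasing (path_trace E).
Proof.
  intros HE r; apply (fa_prob_mono (proj1 HS) Hmu); auto using path_trace_measurable.
  intros v [HEv [HFv Hv]]; repeat split; auto; apply (cyl_antitone (Nat.le_succ_diag_r r)); exact Hv.
Qed.

Lemma path_trace_cv E : S E -> Un_cv (path_trace E) (seq_lim (path_trace E)).
Proof.
  intro HE; apply Un_cv_decreasing_ge0; [apply path_trace_decreasing; exact HE|].
  intro r; apply (fa_prob_ge0 Hmu), path_trace_measurable, HE.
Qed.

Lemma path_trace_lim_ge0 E : S E -> 0 <= seq_lim (path_trace E).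
Proof.
  intro HE.
  assert (Hge0 : forall r, 0 <= path_trace E r)
    by (intro r; apply (fa_prob_ge0 Hmu), path_trace_measurable, HE).
  exact (Rle_cv_lim Hge0 (Un_cv_const 0) (path_trace_cv HE)).
Qed.

Lemma path_trace_lim_le E : S E -> seq_lim (path_trace E) <= mu E.
Proof.
  intro HE.
  assert (Hle : forall r, path_trace E r <= mu E).
  { intro r; apply (fa_prob_mono (proj1 HS) Hmu); [apply path_trace_measurable | | ]; tauto. }
  exact (Rle_cv_lim Hle (path_trace_cv HE) (Un_cv_const (mu E))).
Qed.

Lemma path_trace_lim_pos s L : (forall v, F v -> cyl w s v) ->
  (forall r, L <= mu (cyl w r)) -> mu (cyl w s) - mu F < L ->
  0 < seq_lim (path_trace (full X)).
Proof.
  intros HFs HL Hgap.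
  assert (Hbound : forall r, (s <= r)%nat -> L + mu F - mu (cyl w s) <= path_trace (full X) r).
  { intros r Hr; unfold path_trace.
    replace (fun v => full X v /\ F v /\ cyl w r v) with (fun v => F v /\ cyl w r v)
      by (apply event_ext; intro v; unfold full; tauto).
    pose proof (HL r).
    pose proof (fa_prob_inter_ge (proj1 HS) Hmu HF (cyl_measurable w r HS)
                  (cyl_measurable w s HS) HFs (cyl_antitone Hr)).
    lra. }
  assert (Hall : forall r, L + mu F - mu (cyl w s) <= path_trace (full X) r).
  { intro r; destruct (Nat.le_ge_cases s r) as [Hr|Hr]; [exact (Hbound r Hr)|].
    pose proof (decreasing_prop _ _ _ (path_trace_decreasing (sigma_full (proj1 HS))) Hr).
    pose proof (Hbound s (le_n s)); lra. }
  pose proof (Rle_cv_lim Hall (Un_cv_const _) (path_trace_cv (sigma_full (proj1 HS)))).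
  lra.
Qed.

Hypothesis Hpos : 0 < seq_lim (path_trace (full X)).

Lemma path_cond_eq1 E t : S E -> (forall v, F v -> cyl w t v -> E v) -> path_cond E = 1.
Proof.
  intros HE HEt; unfold path_cond.
  rewrite (@seq_lim_eq (path_trace E) (seq_lim (path_trace (full X)))); [field; lra|].
  apply Un_cv_ext_eventually with (N := t) (u := path_trace (full X)).
  - intros r Hr; unfold path_trace; f_equal; apply event_ext; intro v; split.
    + intros [_ HFv]; repeat split; tauto.
    + intros [_ [HFv Hv]]; repeat split; auto; apply HEt; auto; exact (cyl_antitone Hr Hv).
  - apply path_trace_cv, sigma_full, HS.
Qed.

Lemma path_cond_cyl t : path_cond (cyl w t) = 1.
Proof. apply (path_cond_eq1 (t := t)); [apply cyl_measurable, HS | tauto]. Qed.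

Lemma path_cond_inter_cyl t : path_cond (fun v => F v /\ cyl w t v) = 1.
Proof.
  apply (path_cond_eq1 (t := t)); [|tauto].
  apply (sigma_inter (proj1 HS) HF), cyl_measurable, HS.
Qed.

Lemma path_cond_fa : fa_prob S path_cond.
Proof.
  split; [|split].
  - intros E HE; unfold path_cond, Rdiv.
    apply Rmult_le_pos; [apply path_trace_lim_ge0, HE | left; apply Rinv_0_lt_compat, Hpos].
  - apply (path_cond_eq1 (t := 0%nat)); [apply sigma_full, HS | constructor].
  - intros E G HE HG Hdisj; unfold path_cond.
    assert (Hsum : forall r, path_trace (fun v => E v \/ G v) r
                             = path_trace E r + path_trace G r).
    { intro r; unfold path_trace.
      rewrite <- (fa_prob_add Hmu); [|apply path_trace_measurable; auto ..|firstorder].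
      f_equal; apply event_ext; intro v; tauto. }
    rewrite (@seq_lim_eq _ (seq_lim (path_trace E) + seq_lim (path_trace G))).
    + field; lra.
    + apply Un_cv_ext_eventually with (N := 0%nat) (u := fun r => path_trace E r + path_trace G r).
      * intros r _; apply Hsum.
      * apply CV_plus; apply path_trace_cv; assumption.
Qed.

Lemma path_cond_abs_cont : abs_cont S path_cond mu.
Proof.
  intros En HEn Hcv.
  apply Un_cv_squeeze0 with (u := fun n => mu (En n) * / seq_lim (path_trace (full X))).
  - intro n; unfold path_cond, Rdiv; split.
    + apply Rmult_le_pos; [apply path_trace_lim_ge0, HEn | left; apply Rinv_0_lt_compat, Hpos].
    + apply Rmult_le_compat_r; [left; apply Rinv_0_lt_compat, Hpos | apply path_trace_lim_le, HEn].
  - rewrite <- (Rmult_0_l (/ seq_lim (path_trace (full X)))).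
    apply CV_mult; [exact Hcv | apply Un_cv_const].
Qed.

End PathConditioning.

Lemma not_merges_of_cond_gap (X : Type) (S : event X -> Prop) (P Qt : event X -> event X -> R)
    (w : path X) (F : event X) (c : R) :
  admissible S -> cond_prob S Qt -> S F -> c < 1 ->
  (forall t, Qt (cyl w t) (full X) = 1) ->
  (forall t, P F (cyl w t) <= c) -> (forall t, Qt F (cyl w t) = 1) ->
  ~ merges S P Qt.
Proof.
  intros HS HQt HF Hc Hcyl HPF HQF Hmerge.
  destruct (Hmerge ((1 - c) / 2) ltac:(lra) (1 / 2) ltac:(lra)) as [N HN].
  specialize (HN N (le_n N)).
  set (A := fun v => exists E, S E /\ Rabs (P E (cyl v N) - Qt E (cyl v N)) > (1 - c) / 2)
    in HN.
  assert (HA : S A).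
  { apply HS; intros v HAv; exists N; intros u Hu; unfold A.
    rewrite (cyl_of_mem Hu); exact HAv. }
  assert (HwA : forall v, cyl w N v -> A v).
  { intros v Hv; exists F; rewrite (cyl_of_mem Hv), HQF; split; [exact HF|].
    specialize (HPF N); rewrite Rabs_left1; lra. }
  assert (HQA : 1 <= Qt A (full X)).
  { rewrite <- (Hcyl N); apply (fa_prob_mono (proj1 HS) (cond_prob_full HQt w));
      [apply cyl_measurable | |]; assumption. }
  unfold Rdist in HN; rewrite Rminus_0_r in HN; apply Rabs_def2 in HN; lra.
Qed.

Theorem mainTheorem13 (X : Type) (HX : countable X) (S : event X -> Prop)
  (HS : admissible S) (P : event X -> event X -> R) (HP : in_Delta_BD S P) :
  forall w : path X, Un_cv (fun t => P (cyl w t) (full X)) 0.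
Proof.
  intro w; destruct HP as [[HPc HPna] HBD].
  destruct (cond_prob_cyl_mass HS HPc w) as [L [Hcv [HL0 HLt]]].
  destruct (Req_dec L 0) as [<-|HL]; [exact Hcv | exfalso].
  destruct (Hcv L ltac:(lra)) as [s Hs]; specialize (Hs s (le_n s)).
  unfold Rdist in Hs; apply Rabs_def2 in Hs.
  destruct (HPna (cyl w s) (cyl_measurable w s HS) (1 / 2) ltac:(lra))
    as [F [HF [HFs HPF]]]; cbn beta in HPF.
  pose proof (cond_prob_full HPc w) as HPf.
  assert (Hpos : 0 < seq_lim (path_trace (fun E => P E (full X)) F w (full X)))
    by (apply (path_trace_lim_pos HS HPf HF HFs HLt); lra).
  destruct (HBD _ (path_cond_fa HS HPf HF Hpos) (path_cond_abs_cont HS HPf HF Hpos))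
    as [Qt [HQt [HQtQ Hmerge]]].
  assert (HQcyl : forall t, Qt (cyl w t) (full X) = 1).
  { intro t; rewrite HQtQ by exact (cyl_measurable w t HS); exact (path_cond_cyl HS HPf HF Hpos t). }
  refine (not_merges_of_cond_gap (c := P (cyl w s) (full X) / (2 * L))
            HS HQt HF _ HQcyl _ _ Hmerge).
  - apply Rmult_lt_reg_r with (2 * L); [lra|].
    unfold Rdiv; rewrite Rmult_assoc, Rinv_l, Rmult_1_r by lra; lra.
  - intro t; replace (P (cyl w s) (full X) / (2 * L)) with (P F (full X) / L)
      by (rewrite HPF; field; lra).
    apply (cond_prob_le_ratio HS HPc HF); [lra | apply HLt].
  - intro t; apply (cond_prob_eq1 HQt HF); [|apply HQcyl].
    rewrite HQtQ by (apply (sigma_inter (proj1 HS) HF), cyl_measurable, HS).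
    exact (path_cond_inter_cyl HS HPf HF Hpos t).
Qed.
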